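(* Assume $A\in\mathbb{R}^{n\times n}$ is $(c_A,\gamma_{sys})$-SED and $B\in\mathbb{R}^{n\times m}$ is $(c_B,\gamma_{sys})$-SED, with $\gamma_{sys}>0$ and $c_A,c_B\ge1$. Let $\kappa\ge1$ and $K\in\mathcal{K}^\kappa$ be $(c_K,\gamma_{sys})$-SED and such that $A+BK$ is $(\tau,\rho)$-stable. Fix $i\in[N]$. Then the solution $P_i$ of the Lyapunov equation $$P_i = S_i + [K]_{i:}^\top [R]_{ii}[K]_{i:} + (A+BK)^\top P_i (A+BK)$$ is $(c_{P_i},\gamma_{P_i})$-SED away from $i$, where $$c_{P_i} = \frac{\|S_i + [K]_{i:}^\top [R]_{ii}[K]_{i:}\|\,\tau^2}{1-e^{-2\rho}} + 2\big(\|[S]_{ii}\| + \|[R]_{ii}\|\,c_K^2\big),\qquad \gamma_{P_i} = \frac{\rho\,\gamma_{sys}}{\rho + \ln(N c_A + N^2 c_B c_K)}.$$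
   Context: $\|\cdot\|$ denotes the Euclidean norm / induced $\ell_2$ matrix norm. There are $N$ agents $[N]=\{1,\dots,N\}$ on an undirected graph with graph distance $\mathrm{dist}$ (so $\mathrm{dist}(i,i)=0$, symmetric, triangle inequality). Agent $i$ has state dimension $n_i$ and input dimension $m_i$, $n=\sum_i n_i$, $m=\sum_i m_i$; matrices are partitioned into blocks $[X]_{lj}$ with row indices of agent $l$ and column indices of agent $j$ (using $n$- or $m$-partitions as appropriate); $[X]_{i:}$ denotes the block row of agent $i$. The $\kappa$-neighborhood of $i$ is $\mathcal{N}_i^\kappa=\{j\in[N]:\mathrm{dist}(i,j)<\kappa\}$, and $\mathcal{K}^\kappa=\{K\in\mathbb{R}^{m\times n}: [K]_{ij}=0 \text{ whenever } j\notin\mathcal{N}_i^\kappa\}$. $S\in\mathbb{R}^{n\times n}$ and $R\in\mathbb{R}^{m\times m}$ are block-diagonal with $[S]_{ii}\succeq0$, $[R]_{ii}\succ0$; $S_i\in\mathbb{R}^{n\times n}$ (resp. $R_i\in\mathbb{R}^{m\times m}$) is the matrix whose only nonzero block is the $(i,i)$ block, equal to $[S]_{ii}$ (resp. $[R]_{ii}$). Definition ($(\tau,\rho)$-stability): $X$ is $(\tau,\rho)$-stable ($\tau\ge1,\rho>0$) if $\|X^k\|\le\tau e^{-\rho k}$ for all integers $k\ge0$. Definition (SED): $X$ is $(c,\gamma)$-SED if $\|[X]_{lj}\|\le c\,e^{-\gamma\,\mathrm{dist}(l,j)}$ for all $l,j$. Definition (SED away from $i$): $X$ is $(c,\gamma)$-SED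 away from $i$ if $\|[X]_{lj}\|\le c\,e^{-\gamma\max(\mathrm{dist}(i,l),\mathrm{dist}(i,j))}$ for all $l,j$. *)

From HB Require Import structures.
From mathcomp Require Import all_boot all_order all_algebra.
From mathcomp Require Import all_classical all_reals all_analysis.
Set Implicit Arguments. Unset Strict Implicit. Unset Printing Implicit Defensive.
Import Order.TTheory GRing.Theory Num.Theory.
Local Open Scope ring_scope.

Section Defs.
Variable R : realType.

Definition vnorm k (v : 'cV[R]_k) : R := Num.sqrt (\sum_i (v i 0) ^+ 2).

Definition opnorm p q (X : 'M[R]_(p, q)) : R :=
  sup [set vnorm (X *m v) | v in [set v : 'cV[R]_q | vnorm v = 1]].

(* Agents are 'I_N; coordinates are assigned to agents by a map
   ar : 'I_p -> 'I_N (nondecreasing = contiguous blocks).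
   Block [X]_{lj}: rows of agent l, columns of agent j (in increasing order). *)
Definition blk N p q (ar : 'I_p -> 'I_N) (ac : 'I_q -> 'I_N) (X : 'M[R]_(p, q))
  (l j : 'I_N) : 'M[R]_(#|[pred r | ar r == l]|, #|[pred c | ac c == j]|) :=
  \matrix_(a, b) X (enum_val a) (enum_val b).

Definition blkrow N p q (ar : 'I_p -> 'I_N) (X : 'M[R]_(p, q)) (l : 'I_N)
  : 'M[R]_(#|[pred r | ar r == l]|, q) :=
  \matrix_(a, c) X (enum_val a) c.

Definition only_blk N p (ar : 'I_p -> 'I_N) (X : 'M[R]_p) (i : 'I_N) : 'M[R]_p :=
  \matrix_(r, c) (if (ar r == i) && (ar c == i) then X r c else 0).

Definition block_diagonal N p (ar : 'I_p -> 'I_N) (X : 'M[R]_p) : Prop :=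
  forall r c, ar r != ar c -> X r c = 0.

Definition psd k (M : 'M[R]_k) : Prop :=
  M^T = M /\ forall v : 'cV[R]_k, 0 <= (v^T *m M *m v) 0 0.

Definition pd k (M : 'M[R]_k) : Prop :=
  M^T = M /\ forall v : 'cV[R]_k, v != 0 -> 0 < (v^T *m M *m v) 0 0.

Definition tr_stable k (X : 'M[R]_k) (tau rho : R) : Prop :=
  1 <= tau /\ 0 < rho /\
  forall t : nat, opnorm (X ^+ t) <= tau * expR (- (rho * t%:R)).

Definition SED N (dist : 'I_N -> 'I_N -> nat) p q
  (ar : 'I_p -> 'I_N) (ac : 'I_q -> 'I_N) (X : 'M[R]_(p, q)) (c g : R) : Prop :=
  forall l j, opnorm (blk ar ac X l j) <= c * expR (- (g * (dist l j)%:R)).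

Definition SED_away N (dist : 'I_N -> 'I_N -> nat) p q
  (ar : 'I_p -> 'I_N) (ac : 'I_q -> 'I_N) (X : 'M[R]_(p, q)) (c g : R)
  (i : 'I_N) : Prop :=
  forall l j, opnorm (blk ar ac X l j)
              <= c * expR (- (g * (maxn (dist i l) (dist i j))%:R)).

Definition in_Kkappa N (dist : 'I_N -> 'I_N -> nat) m n
  (agm : 'I_m -> 'I_N) (agn : 'I_n -> 'I_N) (kappa : nat) (K : 'M[R]_(m, n)) : Prop :=
  forall i j, ~~ (dist i j < kappa)%N -> blk agm agn K i j = 0.

End Defs.

From HB Require Import structures.
From mathcomp Require Import all_boot all_order all_algebra.
From mathcomp Require Import all_classical all_reals all_analysis.
From mathcomp Require Import ring lra zify.
Import Order.TTheory GRing.Theory Num.Theory.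
Local Open Scope ring_scope.
Set Implicit Arguments. Unset Strict Implicit. Unset Printing Implicit Defensive.

(* Unrolling the Lyapunov equation writes P_i as the sum over t of
   ((A+BK)^t)^T Q_i (A+BK)^t plus a remainder that vanishes by stability.  As
   Q_i only involves agent i and A+BK is SED with constant c_A + N c_B c_K, the
   (l, j) block of the t-th term is at most c_Q L^(2t) e^(-gamma_sys D) with
   L = N c_A + N^2 c_B c_K and D = max(dist(i,l), dist(i,j)); by
   (tau, rho)-stability it is also at most ||Q_i|| tau^2 e^(-2 rho t).  Using
   the first bound below T ~ gamma_sys D / (2 (rho + ln L)) and the second one
   above it balances both at e^(-gamma_{P_i} D). *)

Section EuclideanNorm.
Variable R : realType.

Definition dot k (u v : 'cV[R]_k) : R := (u^T *m v) 0 0.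

Lemma dotE k (u v : 'cV[R]_k) : dot u v = \sum_i u i 0 * v i 0.
Proof. by rewrite /dot mxE; apply: eq_bigr => i _; rewrite mxE. Qed.

Lemma dot_ge0 k (v : 'cV[R]_k) : 0 <= dot v v.
Proof. by rewrite dotE sumr_ge0 // => i _; rewrite -expr2 sqr_ge0. Qed.

Lemma dot_trmx p q (u : 'cV[R]_p) (X : 'M[R]_(p, q)) (w : 'cV[R]_q) :
  dot u (X *m w) = dot (X^T *m u) w.
Proof. by rewrite /dot trmx_mul trmxK mulmxA. Qed.

Lemma vnormE k (v : 'cV[R]_k) : vnorm v = Num.sqrt (dot v v).
Proof. by rewrite /vnorm dotE; congr Num.sqrt; apply: eq_bigr => i _; rewrite expr2. Qed.

Lemma vnorm_ge0 k (v : 'cV[R]_k) : 0 <= vnorm v.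
Proof. exact: sqrtr_ge0. Qed.

Lemma vnorm_sqr k (v : 'cV[R]_k) : vnorm v ^+ 2 = dot v v.
Proof. by rewrite vnormE sqr_sqrtr // dot_ge0. Qed.

Lemma vnorm0 k : vnorm (0 : 'cV[R]_k) = 0.
Proof. by rewrite vnormE dotE big1 ?sqrtr0 // => i _; rewrite mxE mul0r. Qed.

Lemma vnorm_eq0 k (v : 'cV[R]_k) : vnorm v = 0 -> v = 0.
Proof.
move=> v0; have : dot v v = 0 by rewrite -vnorm_sqr v0 expr0n.
rewrite dotE => /psumr_eq0P vv0; apply/matrixP => i j; rewrite (ord1 j) mxE.
by apply/eqP; rewrite -sqrf_eq0 expr2 vv0 // => r _; rewrite -expr2 sqr_ge0.
Qed.

Lemma vnormZ k (c : R) (v : 'cV[R]_k) : vnorm (c *: v) = `|c| * vnorm v.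
Proof.
rewrite !vnormE -sqrtr_sqr -sqrtrM ?sqr_ge0 //; congr Num.sqrt.
by rewrite !dotE mulr_sumr; apply: eq_bigr => i _; rewrite !mxE; ring.
Qed.

Lemma cauchy_schwarz k (u v : 'cV[R]_k) : dot u v <= vnorm u * vnorm v.
Proof.
have [/vnorm_eq0 ->|nu] := eqVneq (vnorm u) 0.
  by rewrite dotE big1 ?vnorm0 ?mul0r // => i _; rewrite mxE mul0r.
have [/vnorm_eq0 ->|nv] := eqVneq (vnorm v) 0.
  by rewrite dotE big1 ?vnorm0 ?mulr0 // => i _; rewrite mxE mulr0.
have u0 : 0 < vnorm u by rewrite lt_neqAle eq_sym nu vnorm_ge0.
have v0 : 0 < vnorm v by rewrite lt_neqAle eq_sym nv vnorm_ge0.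
(* Expand [0 <= | |v| u - |u| v |^2]. *)
have expand a b : dot (a *: u - b *: v) (a *: u - b *: v) =
    a ^+ 2 * dot u u - 2 * a * b * dot u v + b ^+ 2 * dot v v.
  rewrite !dotE !mulr_sumr -sumrB -big_split /=.
  by apply: eq_bigr => i _; rewrite !mxE; ring.
have := dot_ge0 (vnorm v *: u - vnorm u *: v).
rewrite expand -!vnorm_sqr => h.
have uv0 : 0 < 2 * vnorm v * vnorm u by rewrite !mulr_gt0.
by rewrite -(ler_pM2l uv0); nra.
Qed.

Lemma vnormD k (u v : 'cV[R]_k) : vnorm (u + v) <= vnorm u + vnorm v.
Proof.
rewrite -(ger0_norm (addr_ge0 (vnorm_ge0 u) (vnorm_ge0 v))) -sqrtr_sqr.
rewrite vnormE ler_sqrt ?sqr_ge0 //.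
have -> : dot (u + v) (u + v) = dot u u + 2 * dot u v + dot v v.
  by rewrite !dotE mulr_sumr -!big_split /=; apply: eq_bigr => i _; rewrite !mxE; ring.
by have := cauchy_schwarz u v; rewrite -!vnorm_sqr; nra.
Qed.

Lemma vnorm_le_coord k (w : 'cV[R]_k) (c : 'I_k -> R) (t : R) :
  0 <= t -> (forall r, `|w r 0| <= c r * t) ->
  vnorm w <= Num.sqrt (\sum_r c r ^+ 2) * t.
Proof.
move=> t0 wc; rewrite -(ger0_norm t0) -sqrtr_sqr -sqrtrM ?sumr_ge0 // => [|r _]; last first.
  exact: sqr_ge0.
rewrite /vnorm ler_sqrt ?mulr_ge0 ?sqr_ge0 ?sumr_ge0 // => [|r _]; last exact: sqr_ge0.
rewrite mulr_suml; apply: ler_sum => r _.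
have := wc r; have := normr_ge0 (w r 0).
by rewrite -[w r 0 ^+ 2]real_normK ?num_real //; nra.
Qed.

Lemma vnorm_mulmx_le p q (X : 'M[R]_(p, q)) (v : 'cV[R]_q) :
  vnorm (X *m v) <= Num.sqrt (\sum_r (\sum_k `|X r k|) ^+ 2) * vnorm v.
Proof.
apply: vnorm_le_coord (vnorm_ge0 _) _ => r; rewrite mxE mulr_suml.
apply: le_trans (ler_norm_sum _ _ _) _; apply: ler_sum => k _.
rewrite normrM ler_wpM2l // -sqrtr_sqr /vnorm ler_sqrt ?sumr_ge0 // => [|j _]; last first.
  exact: sqr_ge0.
by rewrite (bigD1 k) //= lerDl sumr_ge0 // => j _; rewrite sqr_ge0.
Qed.

Lemma vnorm_rowsub p p' (f : 'I_p' -> 'I_p) (v : 'cV[R]_p) :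
  injective f -> vnorm (rowsub f v) <= vnorm v.
Proof.
move=> f_inj; rewrite /vnorm ler_sqrt ?sumr_ge0 // => [|j _]; last exact: sqr_ge0.
under eq_bigr do rewrite mxE.
rewrite (bigID (mem (f @: [set: 'I_p'])) predT) /=.
have -> : \sum_(i | i \in f @: [set: 'I_p']) v i 0 ^+ 2 = \sum_i v (f i) 0 ^+ 2.
  rewrite (big_imset (fun j => v j 0 ^+ 2) (in2W f_inj)) /=.
  by apply: eq_bigl => j; rewrite finset.in_setT.
by rewrite lerDl sumr_ge0 // => j _; rewrite sqr_ge0.
Qed.

End EuclideanNorm.

Section OperatorNorm.
Variable R : realType.
Implicit Types p q r : nat.

Lemma opnorm_has_ubound p q (X : 'M[R]_(p, q)) :
  has_ubound [set vnorm (X *m v) | v in [set v : 'cV[R]_q | vnorm v = 1]].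
Proof.
exists (Num.sqrt (\sum_r (\sum_k `|X r k|) ^+ 2)) => _ [v /= v1 <-].
by have := vnorm_mulmx_le X v; rewrite v1 mulr1.
Qed.

Lemma opnorm_nounit p q (X : 'M[R]_(p, q)) :
  ~ (exists v : 'cV[R]_q, vnorm v = 1) -> opnorm X = 0.
Proof.
move=> nounit; rewrite /opnorm; set E := (X in sup X).
suff -> : E = set0 by rewrite sup0.
by rewrite predeqE => y; split => // -[w w1 _]; apply: nounit; exists w.
Qed.

Lemma vnorm_mulmx_opnorm p q (X : 'M[R]_(p, q)) v :
  vnorm (X *m v) <= opnorm X * vnorm v.
Proof.
have [/vnorm_eq0 ->|nv] := eqVneq (vnorm v) 0; first by rewrite mulmx0 !vnorm0 mulr0.
have v0 : 0 < vnorm v by rewrite lt_neqAle eq_sym nv vnorm_ge0.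
have u1 : vnorm ((vnorm v)^-1 *: v) = 1.
  by rewrite vnormZ ger0_norm ?invr_ge0 ?vnorm_ge0 // mulVf.
have : vnorm (X *m ((vnorm v)^-1 *: v)) <= opnorm X.
  by apply: ub_le_sup; [exact: opnorm_has_ubound | exists ((vnorm v)^-1 *: v)].
rewrite -scalemxAr vnormZ ger0_norm ?invr_ge0 ?vnorm_ge0 //.
by rewrite -(ler_pM2l v0) mulrA mulfV ?mul1r // mulrC.
Qed.

Lemma opnorm_ge0 p q (X : 'M[R]_(p, q)) : 0 <= opnorm X.
Proof.
have [[v v1]|nounit] := pselect (exists v : 'cV[R]_q, vnorm v = 1).
  by apply: le_trans (vnorm_ge0 (X *m v)) _; rewrite -[opnorm X]mulr1 -v1 vnorm_mulmx_opnorm.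
by rewrite opnorm_nounit.
Qed.

Lemma opnorm_le p q (X : 'M[R]_(p, q)) (c : R) :
  0 <= c -> (forall v, vnorm (X *m v) <= c * vnorm v) -> opnorm X <= c.
Proof.
move=> c0 Xc.
have [[v v1]|nounit] := pselect (exists v : 'cV[R]_q, vnorm v = 1).
  apply: ge_sup; first by exists (vnorm (X *m v)), v.
  by move=> _ [w /= w1 <-]; rewrite -[c]mulr1 -w1 Xc.
by rewrite opnorm_nounit.
Qed.

Lemma opnorm0 p q : opnorm (0 : 'M[R]_(p, q)) = 0.
Proof.
apply/le_anti; rewrite opnorm_ge0 andbT; apply: opnorm_le => // v.
by rewrite mul0mx vnorm0 mul0r.
Qed.

Lemma opnorm1 p : opnorm (1%:M : 'M[R]_p) <= 1.
Proof. by apply: opnorm_le => // v; rewrite mul1mx mul1r. Qed.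

Lemma opnormD p q (X Y : 'M[R]_(p, q)) : opnorm (X + Y) <= opnorm X + opnorm Y.
Proof.
apply: opnorm_le => [|v]; first by rewrite addr_ge0 ?opnorm_ge0.
rewrite mulmxDl mulrDl; apply: le_trans (vnormD _ _) _.
exact: lerD (vnorm_mulmx_opnorm _ _) (vnorm_mulmx_opnorm _ _).
Qed.

Lemma opnorm_sum p q (I : Type) (s : seq I) (P : pred I) (F : I -> 'M[R]_(p, q)) :
  opnorm (\sum_(t <- s | P t) F t) <= \sum_(t <- s | P t) opnorm (F t).
Proof.
apply: (big_rec2 (fun X x => opnorm X <= x)) => [|t X x _ Xx]; first by rewrite opnorm0.
exact: le_trans (opnormD _ _) (lerD (lexx _) Xx).
Qed.

Lemma opnormM p q r (X : 'M[R]_(p, q)) (Y : 'M[R]_(q, r)) :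
  opnorm (X *m Y) <= opnorm X * opnorm Y.
Proof.
apply: opnorm_le => [|v]; first by rewrite mulr_ge0 ?opnorm_ge0.
rewrite -mulmxA -mulrA; apply: le_trans (vnorm_mulmx_opnorm _ _) _.
by rewrite ler_wpM2l ?opnorm_ge0 ?vnorm_mulmx_opnorm.
Qed.

Lemma opnorm_trmx p q (X : 'M[R]_(p, q)) : opnorm X^T <= opnorm X.
Proof.
apply: opnorm_le => [|v]; first exact: opnorm_ge0.
have t0 : 0 <= vnorm (X^T *m v) by exact: vnorm_ge0.
(* [|X^T v|^2 = <v, X X^T v> <= |v| |X| |X^T v|] *)
have sqr_le : vnorm (X^T *m v) ^+ 2 <= vnorm v * (opnorm X * vnorm (X^T *m v)).
  rewrite vnorm_sqr -dot_trmx; apply: le_trans (cauchy_schwarz _ _) _.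
  by rewrite ler_wpM2l ?vnorm_ge0 ?vnorm_mulmx_opnorm.
have [->|tn] := eqVneq (vnorm (X^T *m v)) 0; first by rewrite mulr_ge0 ?opnorm_ge0 ?vnorm_ge0.
have tp : 0 < vnorm (X^T *m v) by rewrite lt_neqAle eq_sym tn t0.
by rewrite -(ler_pM2r tp) -expr2 mulrAC mulrC.
Qed.

Lemma opnorm_conj p q r (X : 'M[R]_(q, p)) (C : 'M[R]_q) (Y : 'M[R]_(q, r)) :
  opnorm (X^T *m C *m Y) <= opnorm X * opnorm C * opnorm Y.
Proof.
apply: le_trans (opnormM _ _) _; rewrite ler_wpM2r ?opnorm_ge0 //.
apply: le_trans (opnormM _ _) _; rewrite ler_wpM2r ?opnorm_ge0 //.
exact: opnorm_trmx.
Qed.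

Lemma opnorm_rowsub p p' q (f : 'I_p' -> 'I_p) (X : 'M[R]_(p, q)) :
  injective f -> opnorm (rowsub f X) <= opnorm X.
Proof.
move=> f_inj; apply: opnorm_le => [|v]; first exact: opnorm_ge0.
rewrite mul_rowsub_mx; apply: le_trans (vnorm_rowsub _ f_inj) _.
exact: vnorm_mulmx_opnorm.
Qed.

Lemma opnorm_mxsub p q p' q' (f : 'I_p' -> 'I_p) (g : 'I_q' -> 'I_q) (X : 'M[R]_(p, q)) :
  injective f -> injective g -> opnorm (mxsub f g X) <= opnorm X.
Proof.
move=> f_inj g_inj; rewrite mxsubrc; apply: le_trans (opnorm_rowsub _ f_inj) _.
rewrite -[colsub g X]trmxK; apply: le_trans (opnorm_trmx _) _.
rewrite trmx_mxsub; apply: le_trans (opnorm_rowsub _ g_inj) _.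
exact: opnorm_trmx.
Qed.

End OperatorNorm.

Section Blocks.
Variables (R : realType) (N : nat).
Implicit Types p q r : nat.

Lemma agent_enum_val p (ag : 'I_p -> 'I_N) a (x : 'I_#|[pred r | ag r == a]|) :
  ag (enum_val x) = a.
Proof. by have := enum_valP x; rewrite inE => /eqP. Qed.

Lemma opnorm_blk p q (ar : 'I_p -> 'I_N) (ac : 'I_q -> 'I_N) (X : 'M[R]_(p, q)) l j :
  opnorm (blk ar ac X l j) <= opnorm X.
Proof.
rewrite (_ : blk _ _ _ _ _ = mxsub enum_val enum_val X); last first.
  by apply/matrixP => x y; rewrite !mxE.
by apply: opnorm_mxsub; apply: enum_val_inj.
Qed.

Lemma blkD p q (ar : 'I_p -> 'I_N) (ac : 'I_q -> 'I_N) (X Y : 'M[R]_(p, q)) l j :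
  blk ar ac (X + Y) l j = blk ar ac X l j + blk ar ac Y l j.
Proof. by apply/matrixP => x y; rewrite !mxE. Qed.

Lemma blk_sum p q (ar : 'I_p -> 'I_N) (ac : 'I_q -> 'I_N) (I : Type) (s : seq I)
    (F : I -> 'M[R]_(p, q)) l j :
  blk ar ac (\sum_(t <- s) F t) l j = \sum_(t <- s) blk ar ac (F t) l j.
Proof.
by apply/matrixP => x y; rewrite !mxE !summxE; apply: eq_bigr => t _; rewrite mxE.
Qed.

Lemma blk_trmx p q (ar : 'I_p -> 'I_N) (ac : 'I_q -> 'I_N) (X : 'M[R]_(p, q)) l j :
  blk ac ar X^T l j = (blk ar ac X j l)^T.
Proof. by apply/matrixP => x y; rewrite !mxE. Qed.

Lemma blk_mulmx p q r (ar : 'I_p -> 'I_N) (am : 'I_q -> 'I_N) (ac : 'I_r -> 'I_N)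
    (X : 'M[R]_(p, q)) (Y : 'M[R]_(q, r)) l j :
  blk ar ac (X *m Y) l j = \sum_a blk ar am X l a *m blk am ac Y a j.
Proof.
apply/matrixP => x y; rewrite !mxE summxE (partition_big am predT) //=.
apply: eq_bigr => a _; rewrite mxE.
by rewrite (big_enum_val (fun k => X (enum_val x) k * Y k (enum_val y))); apply: eq_bigr => b _; rewrite !mxE.
Qed.

Lemma blk1_neq p (ag : 'I_p -> 'I_N) a b :
  a != b -> blk ag ag (1%:M : 'M[R]_p) a b = 0.
Proof.
move=> ab; apply/matrixP => x y; rewrite !mxE.
by case: eqP => // xy; move: ab; rewrite -(agent_enum_val x) -(agent_enum_val y) xy eqxx.
Qed.

Lemma blk_only_blk p (ag : 'I_p -> 'I_N) (S : 'M[R]_p) i a b :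
  blk ag ag (only_blk ag S i) a b = if (a == i) && (b == i) then blk ag ag S a b else 0.
Proof.
apply/matrixP => x y; rewrite !mxE !agent_enum_val.
by case: ifP; rewrite ?mxE.
Qed.

Lemma blk_conj_only_blk p (ag : 'I_p -> 'I_N) (S W : 'M[R]_p) i l j :
  blk ag ag (W^T *m only_blk ag S i *m W) l j
  = (blk ag ag W i l)^T *m blk ag ag S i i *m blk ag ag W i j.
Proof.
rewrite (blk_mulmx _ ag) (bigD1 i) //= big1 ?addr0 => [|b bi]; last first.
  rewrite (blk_mulmx _ ag) big1 ?mul0mx // => a _.
  by rewrite blk_only_blk (negbTE bi) andbF mulmx0.
rewrite (blk_mulmx _ ag) (bigD1 i) //= big1 ?addr0 => [|a ai]; last first.
  by rewrite blk_only_blk (negbTE ai) mulmx0.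
by rewrite blk_only_blk eqxx blk_trmx.
Qed.

Lemma blk_conj_blkrow p q (ap : 'I_p -> 'I_N) (aq : 'I_q -> 'I_N) (Z : 'M[R]_(q, p)) i
    (C : 'M[R]_#|[pred r | aq r == i]|) l j :
  blk ap ap ((blkrow aq Z i)^T *m C *m blkrow aq Z i) l j
  = (blk aq ap Z i l)^T *m C *m blk aq ap Z i j.
Proof.
apply/matrixP => x y; rewrite !mxE; apply: eq_bigr => b _; rewrite !mxE.
by congr (_ * _); apply: eq_bigr => a _; rewrite !mxE.
Qed.

Lemma blkrow_mulmx p q r (aq : 'I_q -> 'I_N) (Z : 'M[R]_(q, p)) (W : 'M[R]_(p, r)) i :
  blkrow aq Z i *m W = blkrow aq (Z *m W) i.
Proof. by apply/matrixP => x y; rewrite !mxE; apply: eq_bigr => k _; rewrite mxE. Qed.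

End Blocks.

Section SpatialDecay.
Variables (R : realType) (N : nat) (dist : 'I_N -> 'I_N -> nat).
Hypothesis dist_refl : forall i, dist i i = 0%N.
Hypothesis dist_tri : forall i j k, (dist i k <= dist i j + dist j k)%N.
Variable g : R.
Hypothesis g_ge0 : 0 <= g.
Implicit Types p q r : nat.

Lemma expR_decayD (a b : nat) :
  expR (- (g * a%:R)) * expR (- (g * b%:R)) = expR (- (g * (a + b)%:R)).
Proof. by rewrite -expRD natrD mulrDr opprD. Qed.

Lemma expR_decay_le (a b : nat) : (a <= b)%N -> expR (- (g * b%:R)) <= expR (- (g * a%:R)).
Proof. by move=> ab; rewrite ler_expR lerN2 ler_wpM2l // ler_nat. Qed.

Lemma expR_decay_tri l c j :
  expR (- (g * (dist l c)%:R)) * expR (- (g * (dist c j)%:R)) <= expR (- (g * (dist l j)%:R)).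
Proof. by rewrite expR_decayD expR_decay_le. Qed.

Definition SED_row p q (ar : 'I_p -> 'I_N) (ac : 'I_q -> 'I_N) (X : 'M[R]_(p, q)) (c : R) l :=
  forall j, opnorm (blk ar ac X l j) <= c * expR (- (g * (dist l j)%:R)).

Lemma SED_row_const_ge0 p q (ar : 'I_p -> 'I_N) (ac : 'I_q -> 'I_N) X c l :
  SED_row ar ac X c l -> 0 <= c.
Proof.
move=> /(_ l) Xc; rewrite -(pmulr_lge0 _ (expR_gt0 (- (g * (dist l l)%:R)))).
exact: le_trans (opnorm_ge0 _) Xc.
Qed.

Lemma SED_add p q (ar : 'I_p -> 'I_N) (ac : 'I_q -> 'I_N) (X Y : 'M[R]_(p, q)) cX cY :
  SED dist ar ac X cX g -> SED dist ar ac Y cY g -> SED dist ar ac (X + Y) (cX + cY) g.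
Proof.
move=> hX hY l j; rewrite blkD mulrDl.
exact: le_trans (opnormD _ _) (lerD (hX l j) (hY l j)).
Qed.

Lemma SED_row_mulmx p q r (ar : 'I_p -> 'I_N) (am : 'I_q -> 'I_N) (ac : 'I_r -> 'I_N)
    (X : 'M[R]_(p, q)) (Y : 'M[R]_(q, r)) cX cY l :
  SED_row ar am X cX l -> SED dist am ac Y cY g ->
  SED_row ar ac (X *m Y) (N%:R * cX * cY) l.
Proof.
move=> hX hY j; rewrite (blk_mulmx _ am); apply: le_trans (opnorm_sum _ _ _) _.
have cX0 := SED_row_const_ge0 hX; have cY0 := SED_row_const_ge0 (hY l).
apply: le_trans (_ : _ <= \sum_(c < N) cX * cY * expR (- (g * (dist l j)%:R))) _; last first.
  by rewrite sumr_const card_ord -[_ *+ N]mulr_natl !mulrA.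
apply: ler_sum => c _.
apply: le_trans (opnormM _ _) _.
apply: le_trans (ler_pM (opnorm_ge0 _) (opnorm_ge0 _) (hX c) (hY c j)) _.
by rewrite mulrACA ler_wpM2l ?mulr_ge0 ?expR_decay_tri.
Qed.

Lemma SED_mulmx p q r (ar : 'I_p -> 'I_N) (am : 'I_q -> 'I_N) (ac : 'I_r -> 'I_N)
    (X : 'M[R]_(p, q)) (Y : 'M[R]_(q, r)) cX cY :
  SED dist ar am X cX g -> SED dist am ac Y cY g ->
  SED dist ar ac (X *m Y) (N%:R * cX * cY) g.
Proof. by move=> hX hY l; apply: SED_row_mulmx (hX l) hY. Qed.

Lemma SED_row1 p (ag : 'I_p -> 'I_N) l : SED_row ag ag 1%:M 1 l.
Proof.
move=> j; have [<-|lj] := eqVneq l j.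
  rewrite dist_refl mulr0 oppr0 expR0 mulr1.
  by apply: le_trans (opnorm_blk _ _ _ _ _) _; apply: opnorm1.
by rewrite blk1_neq // opnorm0 mul1r expR_ge0.
Qed.

Lemma SED_row_mulmx_exp p n (ar : 'I_p -> 'I_N) (ag : 'I_n -> 'I_N)
    (X : 'M[R]_(p, n)) (M : 'M[R]_n) c cM l :
  SED_row ar ag X c l -> SED dist ag ag M cM g ->
  forall t, SED_row ar ag (X *m M ^+ t) (c * (N%:R * cM) ^+ t) l.
Proof.
move=> hX hM; elim=> [|t IH]; first by rewrite expr0 mulmx1 mulr1.
have -> : c * (N%:R * cM) ^+ t.+1 = N%:R * (c * (N%:R * cM) ^+ t) * cM.
  by rewrite exprSr; ring.
by rewrite exprSr -mulmxE mulmxA; apply: SED_row_mulmx IH hM.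
Qed.

End SpatialDecay.

Section GeometricBounds.
Variable R : realType.
Local Open Scope classical_set_scope.

Lemma sum_expr_le_twice_last (z : R) T : 2 <= z -> \sum_(0 <= t < T.+1) z ^+ t <= 2 * z ^+ T.
Proof.
move=> z2; elim: T => [|T IH]; first by rewrite big_nat1 expr0; lra.
have zT0 : 0 <= z ^+ T by rewrite exprn_ge0 //; lra.
by rewrite big_nat_recr //= exprS; nra.
Qed.

Lemma sum_expr_tail_le (q : R) a b : 0 < q < 1 ->
  \sum_(a <= t < b) q ^+ t <= q ^+ a / (1 - q).
Proof.
move=> /andP[q0 q1]; have qa0 : 0 <= q ^+ a by rewrite exprn_ge0 // ltW.
have [ab|ba] := leqP a b; last first.
  by rewrite big_geq ?(ltnW ba) // divr_ge0 // subr_ge0; exact: ltW.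
rewrite -(subnKC ab) geometric_partial_tail.
by apply: geometric_le_lim; rewrite // gtr0_norm.
Qed.

Lemma le_of_le_add_geometric (x a C q : R) : 0 <= q < 1 ->
  (\forall n \near \oo, x <= a + C * q ^+ n) -> x <= a.
Proof.
move=> /andP[q0 q1] xle.
have aCq : (fun n => a + C * q ^+ n) @ \oo --> a + 0.
  by apply: cvgD; [exact: cvg_cst | apply: (cvg_geometric C); rewrite ger0_norm].
rewrite addr0 in aCq.
by rewrite -(cvg_lim _ aCq) //; apply: limr_ge => //; apply: cvgP aCq.
Qed.

Lemma le_geometric_split (x c1 c2 C q e : R) (f : nat -> R) T :
  0 < q < 1 -> 0 <= c1 ->
  (forall T', x <= \sum_(0 <= t < T') f t + C * q ^+ T') ->
  (forall t, f t <= c1 * q ^+ t) ->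
  \sum_(0 <= t < T) f t <= c2 * e -> q ^+ T <= e ->
  x <= (c1 / (1 - q) + c2) * e.
Proof.
move=> q01 c10 xle fq headT qT; have /andP[q0 q1] := q01.
apply: (@le_of_le_add_geometric _ _ C q); first by rewrite ltW.
near=> T'.
have TT' : (T <= T')%N by near: T'; exact: nbhs_infty_ge.
apply: le_trans (xle T') _; rewrite lerD2r (big_cat_nat (n := T)) //.
have tail : \sum_(T <= t < T') f t <= c1 / (1 - q) * e.
  apply: le_trans (ler_sum _ (fun t _ => fq t)) _.
  rewrite -mulr_sumr; apply: le_trans (ler_wpM2l c10 (sum_expr_tail_le _ _ q01)) _.
  by rewrite mulrA mulrAC ler_wpM2l // divr_ge0 // subr_ge0 ltW.
by rewrite mulrDl addrC lerD.
Unshelve. all: by end_near.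
Qed.

Lemma exists_split_index (gs rho L : R) (D : nat) :
  0 < gs -> 0 < rho -> ((0 < D)%N -> 2 <= L) ->
  exists T, expR (- (2 * rho)) ^+ T <= expR (- (rho * gs / (rho + ln L) * D%:R)) /\
    \sum_(0 <= t < T) (L ^+ 2) ^+ t * expR (- (gs * D%:R))
      <= 2 * expR (- (rho * gs / (rho + ln L) * D%:R)).
Proof.
case: D => [|D] gs0 rho0 L2; first by exists 0%N; rewrite big_geq // expr0 mulr0 oppr0 expR0; lra.
have {}L2 := L2 isT; have lnL0 : 0 < ln L by apply: ln_gt0; lra.
(* [T := floor y + 1] gives [2 rho T >= gamma D] and [2 (T - 1) ln L <= (gs - gamma) D]. *)
set y := gs * D.+1%:R / (2 * (rho + ln L)).
have y0 : 0 <= y by rewrite divr_ge0 // ?mulr_ge0 // ltW // ?ltr0n //; lra.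
have Ty : (Num.truncn y)%:R <= y by rewrite truncn_le.
have yT : y < (Num.truncn y).+1%:R by rewrite -truncn_le_nat.
have gammaD : rho * gs / (rho + ln L) * D.+1%:R = 2 * rho * y.
  by rewrite /y; field; lra.
have gammaD' : rho * gs / (rho + ln L) * D.+1%:R = gs * D.+1%:R - 2 * y * ln L.
  by rewrite /y; field; lra.
exists (Num.truncn y).+1; split.
  by rewrite -expRM_natr ler_expR gammaD; nra.
rewrite -mulr_suml; apply: le_trans (ler_wpM2r (expR_ge0 _) (sum_expr_le_twice_last _ _)) _.
  by rewrite expr2; nra.
rewrite -[X in X <= _]mulrA ler_pM2l // -exprM -[L in L ^+ _](@lnK _ L) ?posrE; last by lra.
by rewrite -expRM_natr -expRD ler_expR natrM gammaD'; nra.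
Qed.

End GeometricBounds.

Lemma lyapunov_unroll (F : comPzRingType) n (M X P : 'M[F]_n) :
  P = X + M^T *m P *m M ->
  forall T, P = \sum_(t < T) (M ^+ t)^T *m X *m M ^+ t + (M ^+ T)^T *m P *m M ^+ T.
Proof.
move=> hP; elim=> [|T IH]; first by rewrite big_ord0 add0r expr0 trmx1 mul1mx mulmx1.
rewrite {1}IH big_ord_recr -addrA; congr (_ + _).
rewrite {1}hP mulmxDr mulmxDl; congr (_ + _).
by rewrite exprS -mulmxE trmx_mul !mulmxA.
Qed.

Section StableConjugation.
Variables (R : realType) (n : nat) (M : 'M[R]_n) (tau rho : R).
Hypothesis M_stable : tr_stable M tau rho.

Lemma opnorm_conj_exp_le (X : 'M[R]_n) t :
  opnorm ((M ^+ t)^T *m X *m M ^+ t) <= opnorm X * tau ^+ 2 * expR (- (2 * rho)) ^+ t.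
Proof.
have [_ [_ Mt]] := M_stable; have Mt0 := opnorm_ge0 (M ^+ t).
apply: le_trans (opnorm_conj _ _ _) _.
apply: le_trans (ler_pM (mulr_ge0 Mt0 (opnorm_ge0 X)) Mt0
  (ler_wpM2r (opnorm_ge0 X) (Mt t)) (Mt t)) _.
suff -> : expR (- (2 * rho)) ^+ t = expR (- (rho * t%:R)) * expR (- (rho * t%:R)).
  by rewrite [X in _ <= X](_ : _ = tau * expR (- (rho * t%:R)) * opnorm X *
    (tau * expR (- (rho * t%:R)))) //; ring.
by rewrite -expRM_natr -expRD; congr expR; ring.
Qed.

End StableConjugation.

Section LyapunovDecay.
Variables (R : realType) (N : nat) (dist : 'I_N -> 'I_N -> nat).
Hypothesis dist_refl : forall i, dist i i = 0%N.
Hypothesis dist_tri : forall i j k, (dist i k <= dist i j + dist j k)%N.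
Variables (n m : nat) (agn : 'I_n -> 'I_N) (agm : 'I_m -> 'I_N).
Variables (S : 'M[R]_n) (Rm : 'M[R]_m) (K : 'M[R]_(m, n)) (M : 'M[R]_n) (i : 'I_N).

Let Q := only_blk agn S i + (blkrow agm K i)^T *m blk agm agm Rm i i *m blkrow agm K i.
Let cQ cK := opnorm (blk agn agn S i i) + opnorm (blk agm agm Rm i i) * cK ^+ 2.

Let cQ_ge0 cK : 0 <= cQ cK.
Proof. by rewrite /cQ addr_ge0 ?opnorm_ge0 // mulr_ge0 ?opnorm_ge0 ?sqr_ge0. Qed.

Lemma opnorm_blk_lyapunov_term (W : 'M[R]_n) l j :
  opnorm (blk agn agn (W^T *m Q *m W) l j) <=
    opnorm (blk agn agn W i l) * opnorm (blk agn agn S i i) * opnorm (blk agn agn W i j)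
  + opnorm (blk agm agn (K *m W) i l) * opnorm (blk agm agm Rm i i)
    * opnorm (blk agm agn (K *m W) i j).
Proof.
rewrite mulmxDr mulmxDl blkD blk_conj_only_blk.
have -> : W^T *m ((blkrow agm K i)^T *m blk agm agm Rm i i *m blkrow agm K i) *m W =
    (blkrow agm (K *m W) i)^T *m blk agm agm Rm i i *m blkrow agm (K *m W) i.
  by rewrite -blkrow_mulmx trmx_mul !mulmxA.
rewrite blk_conj_blkrow.
exact: le_trans (opnormD _ _) (lerD (opnorm_conj _ _ _) (opnorm_conj _ _ _)).
Qed.

Lemma lyapunov_term_decay (cM cK g : R) : 0 <= g ->
  SED dist agn agn M cM g -> SED dist agm agn K cK g ->
  forall t l j, opnorm (blk agn agn ((M ^+ t)^T *m Q *m M ^+ t) l j)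
    <= cQ cK * ((N%:R * cM) ^+ 2) ^+ t * expR (- (g * (maxn (dist i l) (dist i j))%:R)).
Proof.
move=> g0 hM hK t l j; apply: le_trans (opnorm_blk_lyapunov_term _ _ _) _.
have hW := SED_row_mulmx_exp dist_tri g0 (SED_row1 dist_refl g agn i) hM t.
rewrite mul1mx mul1r in hW.
have hKW := SED_row_mulmx_exp dist_tri g0 (hK i) hM t.
set L := N%:R * cM; set El := expR (- (g * (dist i l)%:R)); set Ej := expR (- (g * (dist i j)%:R)).
have Sterm : opnorm (blk agn agn (M ^+ t) i l) * opnorm (blk agn agn S i i)
    * opnorm (blk agn agn (M ^+ t) i j) <= L ^+ t * El * opnorm (blk agn agn S i i) * (L ^+ t * Ej).
  by rewrite ler_pM ?mulr_ge0 ?opnorm_ge0 // ler_pM ?opnorm_ge0.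
have Rterm : opnorm (blk agm agn (K *m M ^+ t) i l) * opnorm (blk agm agm Rm i i)
    * opnorm (blk agm agn (K *m M ^+ t) i j)
    <= cK * L ^+ t * El * opnorm (blk agm agm Rm i i) * (cK * L ^+ t * Ej).
  by rewrite ler_pM ?mulr_ge0 ?opnorm_ge0 // ler_pM ?opnorm_ge0.
have EE : El * Ej <= expR (- (g * (maxn (dist i l) (dist i j))%:R)).
  by rewrite expR_decayD expR_decay_le // geq_max leq_addr leq_addl.
apply: le_trans (lerD Sterm Rterm) _.
rewrite [X in X <= _](_ : _ = cQ cK * (L ^+ 2) ^+ t * (El * Ej)); last by rewrite /cQ exprAC; ring.
by rewrite ler_wpM2l // mulr_ge0 ?cQ_ge0 // exprn_ge0 // sqr_ge0.
Qed.

Theorem lyapunov_SED_away (P : 'M[R]_n) (cM cK g tau rho : R) :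
  0 < g -> 1 <= cM -> SED dist agn agn M cM g -> SED dist agm agn K cK g ->
  tr_stable M tau rho -> P = Q + M^T *m P *m M ->
  SED_away dist agn agn P (opnorm Q * tau ^+ 2 / (1 - expR (- (2 * rho))) + 2 * cQ cK)
    (rho * g / (rho + ln (N%:R * cM))) i.
Proof.
move=> g0 cM1 hM hK Mstab hP l j; have [_ [rho0 _]] := Mstab.
set D := maxn (dist i l) (dist i j).
have q01 : 0 < expR (- (2 * rho)) < 1 by rewrite expR_gt0 expR_lt1 oppr_lt0 mulr_gt0.
have L2 : (0 < D)%N -> 2 <= N%:R * cM.
  move=> D0; have N2 : (1 < N)%N.
    rewrite ltnNge; apply: contraTN D0 => N1.
    have all_i (a : 'I_N) : a = i by apply: ord_inj; move: (ltn_ord a) (ltn_ord i) N1; lia.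
    by rewrite /D (all_i l) (all_i j) dist_refl.
  have N2R : 2 <= N%:R :> R by rewrite (ler_nat R 2 N).
  nra.
have [T [qT headT]] := exists_split_index g0 rho0 L2.
apply: (le_geometric_split
  (f := fun t => opnorm (blk agn agn ((M ^+ t)^T *m Q *m M ^+ t) l j))
  (C := opnorm P * tau ^+ 2) q01 _ _ _ _ qT) => [|T'|t|].
- by rewrite mulr_ge0 ?opnorm_ge0 ?sqr_ge0.
- rewrite {1}(lyapunov_unroll hP T') blkD blk_sum big_mkord.
  apply: le_trans (opnormD _ _) (lerD (opnorm_sum _ _ _) _).
  exact: le_trans (opnorm_blk _ _ _ _ _) (opnorm_conj_exp_le Mstab _ _).
- exact: le_trans (opnorm_blk _ _ _ _ _) (opnorm_conj_exp_le Mstab _ _).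
- apply: le_trans (ler_sum _ (fun t _ => lyapunov_term_decay (ltW g0) hM hK t l j)) _.
  under eq_bigr do rewrite -mulrA.
  by rewrite -mulr_sumr [2 * _]mulrC -[X in _ <= X]mulrA ler_wpM2l ?cQ_ge0.
Qed.

End LyapunovDecay.

Theorem theorem1 (R : realType) (N : nat) (dist : 'I_N -> 'I_N -> nat)
  (dist_refl : forall i, dist i i = 0%N)
  (dist_sym : forall i j, dist i j = dist j i)
  (dist_tri : forall i j k, (dist i k <= dist i j + dist j k)%N)
  (n m : nat) (agn : 'I_n -> 'I_N) (agm : 'I_m -> 'I_N)
  (agn_mono : forall x y : 'I_n, (x <= y)%N -> (agn x <= agn y)%N)
  (agm_mono : forall x y : 'I_m, (x <= y)%N -> (agm x <= agm y)%N)
  (S : 'M[R]_n) (Rm : 'M[R]_m)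
  (S_bd : block_diagonal agn S) (R_bd : block_diagonal agm Rm)
  (S_psd : forall i, psd (blk agn agn S i i))
  (R_pd : forall i, pd (blk agm agm Rm i i))
  (A : 'M[R]_n) (B : 'M[R]_(n, m)) (K : 'M[R]_(m, n))
  (cA cB cK gsys tau rho : R) (kappa : nat)
  (hgsys : 0 < gsys) (hcA : 1 <= cA) (hcB : 1 <= cB)
  (hA : SED dist agn agn A cA gsys) (hB : SED dist agn agm B cB gsys)
  (hkappa : (1 <= kappa)%N) (hK : in_Kkappa dist agm agn kappa K)
  (hKsed : SED dist agm agn K cK gsys)
  (hstab : tr_stable (A + B *m K) tau rho)
  (i : 'I_N) (P : 'M[R]_n) :
  let Q := only_blk agn S i + (blkrow agm K i)^T *m blk agm agm Rm i i *m blkrow agm K i in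
  P = Q + (A + B *m K)^T *m P *m (A + B *m K) ->
  SED_away dist agn agn P
    (opnorm Q * tau ^+ 2 / (1 - expR (- (2 * rho)))
       + 2 * (opnorm (blk agn agn S i i) + opnorm (blk agm agm Rm i i) * cK ^+ 2))
    (rho * gsys / (rho + ln (N%:R * cA + N%:R ^+ 2 * cB * cK)))
    i.
Proof.
move=> Q hP.
have cK0 : 0 <= cK := SED_row_const_ge0 (hKsed i).
have hM : SED dist agn agn (A + B *m K) (cA + N%:R * cB * cK) gsys.
  exact: SED_add hA (SED_mulmx dist_tri (ltW hgsys) hB hKsed).
have cM1 : 1 <= cA + N%:R * cB * cK by rewrite ler_wpDr // !mulr_ge0 ?ler0n //; lra.
have -> : N%:R * cA + N%:R ^+ 2 * cB * cK = N%:R * (cA + N%:R * cB * cK) by ring.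
exact (lyapunov_SED_away dist_refl dist_tri hgsys cM1 hM hKsed hstab hP).
Qed.
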